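(* Let $n\ge 1$, let $x_0<x_1<\dots<x_n$ be real numbers and let $\hat x_0<\hat x_1<\dots<\hat x_n$ be real numbers with $\hat x_0=x_0$ and $\hat x_n=x_n$. Fix $k\in\{0,\dots,n\}$. If $\xi:=\sum_{j\neq k}|r_{jk}(\mathbf{x},\hat{\mathbf{x}})|<1$, then \[ -\frac{\xi^2}{(1-\xi)^3}\Bigl(1+\tfrac14\xi^2\Bigr)\ \le\ z_k(\mathbf{x},\hat{\mathbf{x}})-\sum_{j\neq k} r_{jk}(\mathbf{x},\hat{\mathbf{x}})\ \le\ \frac{\xi^2}{1-\xi}. \]
   Context: For distinct nodes $\mathbf{x}=(x_0,\dots,x_n)$ the barycentric weights are $\lambda_k(\mathbf{x}):=1/\prod_{j\neq k}(x_k-x_j)$. For two node vectors $\mathbf{x},\hat{\mathbf{x}}$ define the relative weight errors $z_k(\mathbf{x},\hat{\mathbf{x}}):=\dfrac{\lambda_k(\mathbf{x})-\lambda_k(\hat{\mathbf{x}})}{\lambda_k(\hat{\mathbf{x}})}$ and the relative errors in node differences $r_{jk}(\mathbf{x},\hat{\mathbf{x}}):=\dfrac{\hat x_k-\hat x_j}{x_k-x_j}-1$ for $j\neq k$. *)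

From mathcomp Require Import all_boot all_order all_algebra.
Set Implicit Arguments. Unset Strict Implicit. Unset Printing Implicit Defensive.
Import Order.TTheory GRing.Theory Num.Theory.
Local Open Scope ring_scope.

Definition bary_weight (R : fieldType) (n : nat) (x : 'I_n.+1 -> R) (k : 'I_n.+1) : R :=
  (\prod_(j < n.+1 | j != k) (x k - x j))^-1.

Definition weight_err (R : fieldType) (n : nat) (x xh : 'I_n.+1 -> R) (k : 'I_n.+1) : R :=
  (bary_weight x k - bary_weight xh k) / bary_weight xh k.

Definition diff_err (R : fieldType) (n : nat) (x xh : 'I_n.+1 -> R) (j k : 'I_n.+1) : R :=
  (xh k - xh j) / (x k - x j) - 1.

From mathcomp Require Import all_boot all_order all_algebra.
From mathcomp Require Import ring lra.
Import Order.TTheory GRing.Theory Num.Theory.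
Local Open Scope ring_scope.

(* Since lambda_k(x) / lambda_k(xh) is the product of the ratios
   (xh_k - xh_j) / (x_k - x_j) = 1 + r_jk, the relative weight error is
   z_k = prod_j (1 + r_jk) - 1.  Expanding the product, the error of its
   first-order approximation 1 + sum_j r_jk is dominated by the same quantity
   for the |r_jk|, namely prod_j (1 + |r_jk|) - 1 - xi, and
   prod_j (1 + |r_jk|) <= 1 / (1 - xi) turns this into xi^2 / (1 - xi).
   The lower bound of the theorem is weaker than the resulting two-sided
   estimate; only distinctness of the nodes is used, not n >= 1 nor the
   shared endpoints. *)

Section ProductExpansion.

Context {R : realFieldType} {I : Type}.
Implicit Types (s : seq I) (f : I -> R).

Lemma norm_prod1D_sub1_le s f :
  `|\prod_(i <- s) (1 + f i) - 1| <= \prod_(i <- s) (1 + `|f i|) - 1.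
Proof.
elim: s => [|i s IH]; first by rewrite !big_nil subrr normr0.
rewrite !big_cons.
set P := \prod_(j <- s) _ in IH *; set Q := \prod_(j <- s) _ in IH *.
have hPQ : `|P| <= Q.
  rewrite -[P](subrK 1); apply: (le_trans (ler_normD _ _)); rewrite normr1; lra.
have hfP : `|f i * P| <= `|f i| * Q by rewrite normrM ler_wpM2l.
have -> : (1 + f i) * P - 1 = (P - 1) + f i * P by ring.
apply: (le_trans (ler_normD _ _)); lra.
Qed.

Lemma norm_prod1D_sub1_sub_sum_le s f :
  `|\prod_(i <- s) (1 + f i) - 1 - \sum_(i <- s) f i|
    <= \prod_(i <- s) (1 + `|f i|) - 1 - \sum_(i <- s) `|f i|.
Proof.
elim: s => [|i s IH]; first by rewrite !big_nil !subrr normr0.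
rewrite !big_cons.
have hfP : `|f i * (\prod_(j <- s) (1 + f j) - 1)|
    <= `|f i| * (\prod_(j <- s) (1 + `|f j|) - 1).
  by rewrite normrM ler_wpM2l ?norm_prod1D_sub1_le.
set P := \prod_(j <- s) _ in IH hfP *; set Q := \prod_(j <- s) _ in IH hfP *.
have -> : (1 + f i) * P - 1 - (f i + \sum_(j <- s) f j)
    = (P - 1 - \sum_(j <- s) f j) + f i * (P - 1) by ring.
apply: (le_trans (ler_normD _ _)); lra.
Qed.

Lemma prod1D_mul_1B_sum_le1 s f :
  (forall i, 0 <= f i) ->
  \prod_(i <- s) (1 + f i) * (1 - \sum_(i <- s) f i) <= 1.
Proof.
move=> f_ge0; elim: s => [|i s IH]; first by rewrite !big_nil subr0 mulr1.
rewrite big_cons big_cons.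
have hQ : 0 <= \prod_(j <- s) (1 + f j).
  by apply: prodr_ge0 => j _; apply: addr_ge0.
have hS : 0 <= \sum_(j <- s) f j by apply: sumr_ge0.
have hfi := f_ge0 i.
have : 0 <= \prod_(j <- s) (1 + f j) * (f i * (f i + \sum_(j <- s) f j)).
  by rewrite !mulr_ge0 ?addr_ge0.
lra.
Qed.

Lemma norm_prod1D_sub1_sub_sum_le_sqr s f :
  let A := \sum_(i <- s) `|f i| in A < 1 ->
  `|\prod_(i <- s) (1 + f i) - 1 - \sum_(i <- s) f i| <= A ^+ 2 / (1 - A).
Proof.
move=> A hA.
have hQ := @prod1D_mul_1B_sum_le1 s (fun i => `|f i|) (fun i => normr_ge0 (f i)).
apply: (le_trans (norm_prod1D_sub1_sub_sum_le s f)).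
rewrite ler_pdivlMr ?subr_gt0 // -/A in hQ *; lra.
Qed.

End ProductExpansion.

Lemma sqr_div_1B_le_cube (R : realFieldType) (a : R) : 0 <= a < 1 ->
  a ^+ 2 / (1 - a) <= a ^+ 2 / (1 - a) ^+ 3 * (1 + a ^+ 2 / 4).
Proof.
case/andP=> a_ge0 a_lt1.
have u_ge1 : 1 <= (1 - a)^-1 by rewrite invf_ge1; lra.
rewrite -exprVn; set u := (1 - a)^-1 in u_ge1 *; set c := a ^+ 2 / 4.
rewrite -mulrA ler_wpM2l ?sqr_ge0 //.
have c_ge0 : 0 <= c by rewrite divr_ge0 ?sqr_ge0.
have u3_ge_u : u <= u ^+ 3.
  by rewrite -[leLHS]expr1 ler_weXn2l // ltnW.
have : 0 <= u ^+ 3 * c by rewrite mulr_ge0 // exprn_ge0 // (le_trans ler01).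
rewrite mulrDr mulr1; lra.
Qed.

Lemma ltn_homo_ord_injective {R : realFieldType} {n : nat} {y : 'I_n.+1 -> R} :
  (forall i j : 'I_n.+1, (i < j)%N -> y i < y j) -> injective y.
Proof.
move=> y_lt i j yij; apply: val_inj.
case: (ltngtP i j) => // /y_lt; by rewrite yij ltxx.
Qed.

Lemma weight_err_prod {R : fieldType} {n : nat} {x xh : 'I_n.+1 -> R} (k : 'I_n.+1) :
  injective x -> injective xh ->
  weight_err x xh k = \prod_(j < n.+1 | j != k) (1 + diff_err x xh j k) - 1.
Proof.
move=> x_inj xh_inj.
have prod_neq0 (y : 'I_n.+1 -> R) : injective y ->
    \prod_(j < n.+1 | j != k) (y k - y j) != 0.
  move=> y_inj; apply/prodf_neq0 => j jk.
  by rewrite subr_eq0 (inj_eq y_inj) eq_sym.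
have -> : \prod_(j < n.+1 | j != k) (1 + diff_err x xh j k) =
    \prod_(j < n.+1 | j != k) (xh k - xh j) / \prod_(j < n.+1 | j != k) (x k - x j).
  by rewrite -prodfV -big_split /=; apply: eq_bigr => j _; rewrite /diff_err; ring.
rewrite /weight_err /bary_weight; field.
by rewrite !prod_neq0 ?oner_neq0.
Qed.

Theorem lemma1 (R : realFieldType) (n : nat) (x xh : 'I_n.+1 -> R) (k : 'I_n.+1) :
  (1 <= n)%N ->
  (forall i j : 'I_n.+1, (i < j)%N -> x i < x j) ->
  (forall i j : 'I_n.+1, (i < j)%N -> xh i < xh j) ->
  xh ord0 = x ord0 ->
  xh ord_max = x ord_max ->
  let xi := \sum_(j < n.+1 | j != k) `|diff_err x xh j k| in
  xi < 1 ->
  - (xi ^+ 2 / (1 - xi) ^+ 3) * (1 + xi ^+ 2 / 4)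
    <= weight_err x xh k - \sum_(j < n.+1 | j != k) diff_err x xh j k
  /\ weight_err x xh k - \sum_(j < n.+1 | j != k) diff_err x xh j k
    <= xi ^+ 2 / (1 - xi).
Proof.
move=> _ x_lt xh_lt _ _ xi xi_lt1.
rewrite (weight_err_prod k (ltn_homo_ord_injective x_lt) (ltn_homo_ord_injective xh_lt)).
have := norm_prod1D_sub1_sub_sum_le_sqr
  [seq j <- index_enum 'I_n.+1 | j != k] (fun j => diff_err x xh j k).
rewrite !big_filter -/xi => /(_ xi_lt1) /ler_normlP[lower upper].
split=> //; rewrite mulNr lerNl; apply: le_trans lower _.
by apply: sqr_div_1B_le_cube; rewrite xi_lt1 andbT; apply: sumr_ge0.
Qed.
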